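(* Work in $\mathrm{IKP} + \mathrm{PlUb}$. Let $\alpha$ be a thin ordinal and let $\beta, \gamma$ be ordinals with $\beta, \gamma \subseteq \alpha$. Then \[\gamma \subseteq \beta \leftrightarrow \gamma^{\mathrm{pl}} \subseteq \beta^{\mathrm{pl}}.\]
   Context: $\mathrm{IKP}$ is intuitionistic Kripke–Platek set theory (with strong infinity). An ordinal is a transitive set of transitive sets. An ordinal $\alpha$ is thin if for all $\beta, \gamma \in \alpha$, $\gamma \subseteq \beta \rightarrow (\gamma \in \beta \lor \gamma = \beta)$. For sets $\alpha,\gamma$, $\mathrm{relpl}_\alpha(\gamma)$ denotes $\forall \delta \in \gamma\ \forall \varepsilon \in \alpha\,(\varepsilon \subseteq \delta \rightarrow \varepsilon \in \gamma)$. $\mathrm{PlOrd}$ is the class of ordinals $\alpha$ such that for all $\beta \in \alpha$ and all $\gamma \subseteq \beta$ with $\mathrm{relpl}_\alpha(\gamma)$, we have $\gamma \in \alpha$ and $\forall \delta \in \alpha\,(\beta \in \delta \rightarrow \gamma \in \delta)$. $\mathrm{PlUb}$ is the axiom $\forall \alpha \in \mathrm{PlOrd}\ \exists \beta \in \mathrm{PlOrd}\ \alpha \in \beta$; under it each $\alpha \in \mathrm{PlOrd}$ has a plump successor $\alpha^{\mathrm{pl}+} = \mathcal{P}(\alpha)\cap\mathrm{PlOrd}$ which is a set. The plump operator $(-)^{\mathrm{pl}} : \mathrm{Ord} \to \mathrm{PlOrd}$ is defined by recursion as $\alpha^{\mathrm{pl}} = \bigcup_{\beta \in \alpha} (\beta^{\mathrm{pl}})^{\mathrm{pl}+}$.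 *)

(* Semantic formalization of the theory IKP + PlUb (intuitionistic Kripke-Platek
   set theory with strong infinity, plus the plump-unboundedness axiom),
   expanded by a function symbol [pl] for the plump operator (-)^pl. *)
From Stdlib Require Import Arith.

Set Implicit Arguments.

Inductive term : Type :=
| tvar : nat -> term
| tpl  : term -> term.

Inductive form : Type :=
| fmem : term -> term -> form
| feq  : term -> term -> form
| fbot : form
| fand : form -> form -> form
| for_ : form -> form -> form
| fimp : form -> form -> form
| fall : form -> form                (* forall x, p   (x = var 0) *)
| fex  : form -> form
| fball : term -> form -> form       (* forall x in t, p  (t in outer context) *)
| fbex  : term -> form -> form.

Definition pure_term (t : term) : Prop :=
  match t with tvar _ => True | tpl _ => False end.

Fixpoint delta0 (p : form) : Prop :=
  match p with
  | fmem t u | feq t u => pure_term t /\ pure_term u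
  | fbot => True
  | fand p q | for_ p q | fimp p q => delta0 p /\ delta0 q
  | fall _ | fex _ => False
  | fball t p | fbex t p => pure_term t /\ delta0 p
  end.

Definition scons {V : Type} (x : V) (env : nat -> V) : nat -> V :=
  fun n => match n with 0 => x | S k => env k end.

Section Sem.
Variables (V : Type) (mem : V -> V -> Prop) (pl : V -> V).

Fixpoint teval (env : nat -> V) (t : term) : V :=
  match t with
  | tvar n => env n
  | tpl t => pl (teval env t)
  end.

Fixpoint sat (env : nat -> V) (p : form) : Prop :=
  match p with
  | fmem t u => mem (teval env t) (teval env u)
  | feq t u => teval env t = teval env u
  | fbot => False
  | fand p q => sat env p /\ sat env q
  | for_ p q => sat env p \/ sat env q
  | fimp p q => sat env p -> sat env q
  | fall p => forall x, sat (scons x env) p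
  | fex p => exists x, sat (scons x env) p
  | fball t p => forall x, mem x (teval env t) -> sat (scons x env) p
  | fbex t p => exists x, mem x (teval env t) /\ sat (scons x env) p
  end.

Definition subset (x y : V) : Prop := forall z, mem z x -> mem z y.

Definition transitive (x : V) : Prop := forall y, mem y x -> subset y x.

Definition is_ord (x : V) : Prop :=
  transitive x /\ forall y, mem y x -> transitive y.

Definition thin (a : V) : Prop :=
  is_ord a /\
  forall b c, mem b a -> mem c a -> subset c b -> mem c b \/ c = b.

Definition relpl (a g : V) : Prop :=
  forall d, mem d g -> forall e, mem e a -> subset e d -> mem e g.

Definition PlOrd (a : V) : Prop :=
  is_ord a /\
  forall b, mem b a -> forall g, subset g b -> relpl a g ->
    mem g a /\ forall d, mem d a -> mem b d -> mem g d.

Definition is_succ (y x : V) : Prop := forall z, mem z y <-> mem z x \/ z = x.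
Definition is_empty (e : V) : Prop := forall z, ~ mem z e.
Definition Ind (a : V) : Prop :=
  (exists e, mem e a /\ is_empty e) /\
  forall x, mem x a -> exists y, mem y a /\ is_succ y x.

End Sem.

Record IKP_PlUb_model : Type := {
  V : Type;
  mem : V -> V -> Prop;
  pl : V -> V;
  ax_ext : forall x y, (forall z, mem z x <-> mem z y) -> x = y;
  ax_pair : forall x y, exists z, mem x z /\ mem y z;
  ax_union : forall x, exists z, forall y, mem y x -> forall w, mem w y -> mem w z;
  ax_strong_inf : exists a, Ind mem a /\
      forall b, Ind mem b -> forall x, mem x a -> mem x b;
  ax_sep : forall (p : form) (env : nat -> V) (a : V), delta0 p ->
      exists b, forall x, mem x b <-> (mem x a /\ sat mem pl (scons x env) p);
  ax_coll : forall (p : form) (env : nat -> V) (a : V), delta0 p ->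
      (forall x, mem x a -> exists y, sat mem pl (scons y (scons x env)) p) ->
      exists b, forall x, mem x a ->
        exists y, mem y b /\ sat mem pl (scons y (scons x env)) p;
  (* set induction scheme, for all formulas of the language {mem, pl} *)
  ax_ind : forall (p : form) (env : nat -> V),
      (forall x, (forall y, mem y x -> sat mem pl (scons y env) p) ->
                 sat mem pl (scons x env) p) ->
      forall x, sat mem pl (scons x env) p;
  ax_PlUb : forall a, PlOrd mem a -> exists b, PlOrd mem b /\ mem a b;
  (* defining equation of the plump operator on ordinals:
     x^pl = U_{y in x} (y^pl)^{pl+},  where  (y^pl)^{pl+} = P(y^pl) ∩ PlOrd *)
  ax_pl : forall x, is_ord mem x ->
      forall z, mem z (pl x) <-> exists y, mem y x /\ subset mem z (pl y) /\ PlOrd mem z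
}.

(* The forward direction is monotonicity of (-)^pl.  For the converse, given
   c^pl ⊆ b^pl and g ∈ c, we have g^pl ∈ c^pl ⊆ b^pl, so g^pl ⊆ e^pl for some
   e ∈ b.  By set induction over the elements of a this gives g ⊆ e, and
   thinness of a turns g ⊆ e into g ∈ e or g = e; either way g ∈ b.  The only
   nontrivial ingredient is that x^pl is itself plump, which is needed to see
   g^pl ∈ c^pl. *)
Set Implicit Arguments.
Unset Strict Implicit.

Section Plump.
Variable M : IKP_PlUb_model.
Notation mem := (mem M).
Notation pl := (pl M).
Notation sub := (subset mem).

Lemma is_ord_mem x y : is_ord mem x -> mem y x -> is_ord mem y.
Proof.
  intros [Tx Ex] Hy. split; [exact (Ex y Hy)|].
  intros z Hz. exact (Ex z (Tx y Hy z Hz)).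
Qed.

Lemma pl_monotone x y : is_ord mem x -> is_ord mem y -> sub x y -> sub (pl x) (pl y).
Proof.
  intros Ox Oy Hxy z Hz. apply (ax_pl M Oy). apply (ax_pl M Ox) in Hz.
  destruct Hz as [w [Hw Hzw]]. exists w. split; [exact (Hxy w Hw)|exact Hzw].
Qed.

Lemma transitive_pl x : is_ord mem x -> transitive mem (pl x).
Proof.
  intros Ox z Hz w Hw. apply (ax_pl M Ox) in Hz. destruct Hz as [y [Hy [Hzy _]]].
  assert (Oy : is_ord mem y) by exact (is_ord_mem Ox Hy).
  destruct (proj1 (ax_pl M Oy w) (Hzy w Hw)) as [y' [Hy' [Hwy' Pw]]].
  assert (Hy'y : sub (pl y') (pl y)).
  { apply pl_monotone; [exact (is_ord_mem Oy Hy')|exact Oy|].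
    exact (proj1 Oy y' Hy'). }
  apply (ax_pl M Ox). exists y. split; [exact Hy|]. split; [|exact Pw].
  intros u Hu. exact (Hy'y u (Hwy' u Hu)).
Qed.

Lemma PlOrd_of_relpl_subset X b g : transitive mem X -> mem b X -> PlOrd mem b ->
  sub g b -> relpl mem X g -> PlOrd mem g.
Proof.
  intros TX HbX [[Tb Eb] Pb] Hgb Hrel.
  assert (HgX : forall d, mem d g -> mem d X) by (intros d Hd; exact (TX b HbX d (Hgb d Hd))).
  assert (Tg : transitive mem g).
  { intros d Hd e He. apply (Hrel d Hd e); [exact (TX d (HgX d Hd) e He)|].
    exact (Eb d (Hgb d Hd) e He). }
  split; [split; [exact Tg|intros d Hd; exact (Eb d (Hgb d Hd))]|].
  intros b' Hb' g' Hg' Hrel'.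
  assert (Hrelb : relpl mem b g').
  { intros d Hd e He Hed. apply (Hrel' d Hd e); [|exact Hed].
    exact (Hrel d (Tg b' Hb' d (Hg' d Hd)) e (TX b HbX e He) Hed). }
  destruct (Pb b' (Hgb b' Hb') g' Hg' Hrelb) as [Hg'b Hup]. split.
  - exact (Hrel b' Hb' g' (TX b HbX g' Hg'b) Hg').
  - intros d Hd Hb'd. exact (Hup d (Hgb d Hd) Hb'd).
Qed.

Lemma PlOrd_of_plump_closed X : transitive mem X ->
  (forall z, mem z X -> PlOrd mem z) ->
  (forall z w, mem z X -> sub w z -> PlOrd mem w -> mem w X) ->
  PlOrd mem X.
Proof.
  intros TX PX CX. split; [split; [exact TX|intros z Hz; exact (proj1 (proj1 (PX z Hz)))]|].
  intros b Hb g Hgb Hrel. split.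
  - apply (CX b g Hb Hgb). exact (PlOrd_of_relpl_subset TX Hb (PX b Hb) Hgb Hrel).
  - intros d Hd Hbd.
    assert (Hreld : relpl mem d g).
    { intros f Hf e He Hef. exact (Hrel f Hf e (TX d Hd e He) Hef). }
    exact (proj1 (proj2 (PX d Hd) b Hbd g Hgb Hreld)).
Qed.

Lemma PlOrd_pl x : is_ord mem x -> PlOrd mem (pl x).
Proof.
  intros Ox. apply PlOrd_of_plump_closed; [exact (transitive_pl Ox)| |].
  - intros z Hz. apply (ax_pl M Ox) in Hz. destruct Hz as [_ [_ [_ Pz]]]. exact Pz.
  - intros z w Hz Hwz Pw. apply (ax_pl M Ox) in Hz. destruct Hz as [y [Hy [Hzy _]]].
    apply (ax_pl M Ox). exists y. split; [exact Hy|]. split; [|exact Pw].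
    intros u Hu. exact (Hzy u (Hwz u Hu)).
Qed.

Lemma pl_mem_pl x g : is_ord mem x -> mem g x -> mem (pl g) (pl x).
Proof.
  intros Ox Hg. apply (ax_pl M Ox). exists g. split; [exact Hg|].
  split; [intros u Hu; exact Hu|exact (PlOrd_pl (is_ord_mem Ox Hg))].
Qed.

Lemma subset_of_pl_subset_step a x d : thin mem a -> sub x a ->
  is_ord mem x -> is_ord mem d -> sub d a -> sub (pl x) (pl d) ->
  (forall g, mem g x -> forall e, mem e a -> sub (pl g) (pl e) -> sub g e) ->
  sub x d.
Proof.
  intros [_ Thin] Hxa Ox Od Hda Hpl IH g Hg.
  destruct (proj1 (ax_pl M Od _) (Hpl _ (pl_mem_pl Ox Hg))) as [e [He [Hge _]]].
  destruct (Thin e g (Hda e He) (Hxa g Hg) (IH g Hg e (Hda e He) Hge)) as [Hge'|<-].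
  - exact (proj1 Od e He g Hge').
  - exact He.
Qed.

(* Set induction ([ax_ind]) is only available for object-level formulas; this
   is the claim of [subset_of_pl_subset] about x (de Bruijn index 0), with the
   parameter a at index 1. *)
Definition pl_reflects_subset_form : form :=
  fimp (fmem (tvar 0) (tvar 1))
    (fall (fimp (fmem (tvar 0) (tvar 2))
      (fimp (fball (tpl (tvar 1)) (fmem (tvar 0) (tpl (tvar 1))))
            (fball (tvar 1) (fmem (tvar 0) (tvar 1)))))).

Lemma sat_pl_reflects_subset_form a x :
  sat mem pl (scons x (fun _ => a)) pl_reflects_subset_form <->
  (mem x a -> forall e, mem e a -> sub (pl x) (pl e) -> sub x e).
Proof. cbn. unfold subset. tauto. Qed.

Lemma subset_of_pl_subset a x e : thin mem a -> mem x a -> mem e a ->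
  sub (pl x) (pl e) -> sub x e.
Proof.
  intros Ha Hx. revert e. revert x Hx.
  cut (forall x, sat mem pl (scons x (fun _ => a)) pl_reflects_subset_form).
  { intros H x. exact (proj1 (sat_pl_reflects_subset_form a x) (H x)). }
  assert (Oa : is_ord mem a) by exact (proj1 Ha).
  apply ax_ind. intros x IH. apply sat_pl_reflects_subset_form. intros Hx e He Hpl.
  apply (subset_of_pl_subset_step Ha (proj1 Oa x Hx) (is_ord_mem Oa Hx) (is_ord_mem Oa He)
           (proj1 Oa e He) Hpl).
  intros g Hg. exact (proj1 (sat_pl_reflects_subset_form a g) (IH g Hg) (proj1 Oa x Hx g Hg)).
Qed.

End Plump.

Theorem lemma5p5 (M : IKP_PlUb_model) (a b c : V M) :
  thin (mem M) a -> is_ord (mem M) b -> is_ord (mem M) c ->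
  subset (mem M) b a -> subset (mem M) c a ->
  (subset (mem M) c b <-> subset (mem M) (pl M c) (pl M b)).
Proof.
  intros Ha Ob Oc Hba Hca. split.
  - exact (pl_monotone Oc Ob).
  - intros Hpl. apply (subset_of_pl_subset_step Ha Hca Oc Ob Hba Hpl).
    intros g Hg e He. exact (subset_of_pl_subset Ha (Hca g Hg) He).
Qed.
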